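(* Let $\mathrm{M}$ be a (loopless) matroid of rank $d+1$ with $d\ge2$. Then \[ \deg\Big(\big((d+2)c_2-2d\,c_1^2\big)\alpha^{d-2}\Big)=(3d+2)\Big(N_2(\mathrm{M})-\binom{d+1}{2}\Big)\ge0, \] where $N_2(\mathrm{M})$ is the number of rank-$2$ flats of $\mathrm{M}$.
   Context: For a loopless matroid $\mathrm{M}$ on ground set $E$ of rank $d+1$, its Chow ring is $A^*(\mathrm{M})=\mathbb{Z}[x_F : F \text{ a nonempty proper flat}]/(I+J)$, where $I$ is generated by $x_Fx_G$ for incomparable flats $F,G$ and $J$ by $\sum_{F\ni i}x_F-\sum_{F\ni j}x_F$ for $i,j\in E$. $\deg\colon A^d(\mathrm{M})\to\mathbb{Z}$ sends $x_{F_1}\cdots x_{F_d}$ to $1$ for every chain $F_1\subsetneq\cdots\subsetneq F_d$ of nonempty proper flats. $\alpha=\sum_{F\ni i}x_F$ (independent of $i$), $Z_k=\sum_{\operatorname{rk}F=k}x_F$, and $c(\mathrm{M})=\prod_{i=1}^d(1+Z_i)\cdot\prod_{i=0}^d(1+\alpha-\sum_{j=1}^iZ_{d+1-j})$ with $c_k$ its degree-$k$ part. *)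

From HB Require Import structures.
From mathcomp Require Import all_boot all_order all_algebra.
From mathcomp Require Import mpoly.

Set Implicit Arguments.
Unset Strict Implicit.
Unset Printing Implicit Defensive.

Import Order.TTheory GRing.Theory Num.Theory.
Local Open Scope ring_scope.

Record matroid (E : finType) := Matroid {
  mrk : {set E} -> nat;
  mrk0 : mrk set0 = 0%N;
  mrk_card : forall A, (mrk A <= #|A|)%N;
  mrk_mono : forall A B : {set E}, A \subset B -> (mrk A <= mrk B)%N;
  mrk_submod : forall A B : {set E}, (mrk (A :|: B) + mrk (A :&: B) <= mrk A + mrk B)%N
}.

Definition loopless (E : finType) (M : matroid E) : Prop :=
  forall e : E, mrk M [set e] = 1%N.

Definition mrank (E : finType) (M : matroid E) : nat := mrk M [set: E].

Definition is_flat (E : finType) (M : matroid E) (F : {set E}) : bool :=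
  [forall e, (e \notin F) ==> (mrk M F < mrk M (e |: F))%N].

Definition npflat (E : finType) (M : matroid E) (F : {set E}) : bool :=
  [&& is_flat M F, F != set0 & F != [set: E]].

Definition N2 (E : finType) (M : matroid E) : nat :=
  #|[set F : {set E} | is_flat M F & mrk M F == 2%N]|.

(* We take one variable for every subset of E; the variables x_S with S not a
   nonempty proper flat are killed by extra generators of the ideal, so the
   quotient is exactly Z[x_F : F nonempty proper flat]/(I+J). *)
Definition nv (E : finType) : nat := #|{set E}|.
Definition Pol (E : finType) := {mpoly int[nv E]}.

Definition xv (E : finType) (X : {set E}) : Pol E := 'X_(enum_rank X).

Definition genI (E : finType) (M : matroid E) : seq (Pol E) :=
  [seq xv F * xv G | F <- enum [pred F | npflat M F],
                     G <- enum [pred G | npflat M G & ~~ ((F \subset G) || (G \subset F))]].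

Definition sum_ni (E : finType) (M : matroid E) (i : E) : Pol E :=
  \sum_(F : {set E} | npflat M F && (i \in F)) xv F.

Definition genJ (E : finType) (M : matroid E) : seq (Pol E) :=
  [seq sum_ni M i - sum_ni M j | i <- enum E, j <- enum E].

Definition genK (E : finType) (M : matroid E) : seq (Pol E) :=
  [seq xv X | X <- enum [pred X | ~~ npflat M X]].

Definition gens (E : finType) (M : matroid E) : seq (Pol E) :=
  genI M ++ genJ M ++ genK M.

Definition in_ideal (E : finType) (g : seq (Pol E)) (p : Pol E) : Prop :=
  exists c : seq (Pol E), size c = size g /\
    p = \sum_(k < size g) c`_k * g`_k.

Definition ishom (E : finType) (k : nat) (p : Pol E) : bool :=
  all (fun m => mdeg m == k) (msupp p).

Definition hpart (E : finType) (k : nat) (p : Pol E) : Pol E :=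
  \sum_(m <- msupp p | mdeg m == k) p@_m *: 'X_[m].

(* A degree map: an additive map D on polynomials which, on homogeneous
   polynomials of degree d, factors through A^d(M) (vanishes on the ideal)
   and sends x_{F_1}...x_{F_d} to 1 for every strict chain of nonempty proper
   flats F_1 < ... < F_d.  Its restriction to degree-d classes is deg. *)
Definition is_deg_map (E : finType) (M : matroid E) (d : nat) (D : Pol E -> int) : Prop :=
  [/\ (forall p q, D (p + q) = D p + D q),
      (forall p, ishom d p -> in_ideal (gens M) p -> D p = 0) &
      (forall F : 'I_d -> {set E},
          (forall k, npflat M (F k)) ->
          (forall k l : 'I_d, (k < l)%N -> F k \proper F l) ->
          D (\prod_(k < d) xv (F k)) = 1)].

Definition alpha (E : finType) (M : matroid E) (i : E) : Pol E := sum_ni M i.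

Definition Zk (E : finType) (M : matroid E) (k : nat) : Pol E :=
  \sum_(F : {set E} | npflat M F && (mrk M F == k)) xv F.

Definition cM (E : finType) (M : matroid E) (d : nat) (i : E) : Pol E :=
  (\prod_(1 <= k < d.+1) (1 + Zk M k)) *
  (\prod_(0 <= k < d.+1)
      (1 + alpha M i - \sum_(1 <= j < k.+1) Zk M (d.+1 - j))).

Definition ck (E : finType) (M : matroid E) (d : nat) (i : E) (k : nat) : Pol E :=
  hpart k (cM M d i).

From HB Require Import structures.
From mathcomp Require Import all_boot all_order all_algebra.
From mathcomp Require Import mpoly.
From mathcomp Require Import zify ring.
Import Order.TTheory GRing.Theory Num.Theory.
Local Open Scope ring_scope.
Set Implicit Arguments.
Unset Strict Implicit.

(* Everything is read off the pairing B(p, q) = deg(p q alpha^(d-2)) on linear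
   forms.  For a flag F_1 < ... < F_k of nonempty proper flats with top T,
   replace one alpha in alpha^n x_{F_1} ... x_{F_k} by the sum of the x_G over
   the flats G containing a fixed j outside T: the x_G incomparable with T die
   in the Chow ring, and by induction on n the others contribute [rk G = k + 1],
   a condition met only by the closure of T + j.  Hence
   deg(alpha^n x_{F_1} ... x_{F_k}) = [rk F_k = k].  So B kills the x_F with
   rk F >= 3, and on alpha, Z_1, Z_2 it only involves the numbers of flats of
   ranks 1 and 2 and of incident pairs of them.  Writing c(M) as the product of
   the 1 + l over 2d + 1 linear forms l gives c_1 = L := sum l and
   2 c_2 = L^2 - sum l^2, and B(L, L) = (d+1)^2 - N_2 and
   sum B(l, l) = d + 1 - 3 N_2 yield the identity.  For the inequality, the
   closures of the 2-subsets of a basis are C(d+1, 2) distinct rank-2 flats. *)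

Section MatroidClosure.
Variables (E : finType) (M : matroid E).
Local Notation rk := (mrk M).

Lemma rk_setU1 (A : {set E}) e : (rk (e |: A) <= (rk A).+1)%N.
Proof.
have := mrk_submod M [set e] A; have := mrk_card M [set e].
rewrite cards1; lia.
Qed.

Lemma flat_rk_setU1 (F : {set E}) e :
  is_flat M F -> e \notin F -> rk (e |: F) = (rk F).+1.
Proof.
move=> /forallP /(_ e) flatF eF; rewrite eF /= in flatF.
by apply/eqP; rewrite eqn_leq flatF rk_setU1.
Qed.

Lemma flat_rk_proper (F G : {set E}) : is_flat M F -> F \proper G -> (rk F < rk G)%N.
Proof.
move=> flatF /properP [sFG [e eG eF]].
rewrite -ltnS -(flat_rk_setU1 flatF eF) ltnS mrk_mono //.
by rewrite subUset sub1set eG.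
Qed.

Lemma rk_setU_spanned (A B : {set E}) :
  (forall e, e \in B -> rk (e |: A) = rk A) -> rk (A :|: B) = rk A.
Proof.
move=> spanB.
suff spanned (s : seq E) : {subset s <= B} -> rk (A :|: [set x in s]) = rk A.
  by rewrite -[B]set_enum spanned // => x; rewrite mem_enum.
elim: s => [|e s IH] sB; first by rewrite set_nil setU0.
rewrite set_cons setUCA; set As := A :|: [set x in s].
have Es : rk As = rk A by apply: IH => x xs; apply: sB; rewrite inE xs orbT.
have Ee : rk (e |: A) = rk A by rewrite spanB // sB ?mem_head.
have := mrk_submod M As (e |: A).
have -> : As :|: (e |: A) = e |: As by rewrite /As setUCA setUAC setUA setUid setUA.
have : (rk A <= rk (As :&: (e |: A)))%N.
  by rewrite mrk_mono // subsetI subsetUl subsetUr.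
have : (rk As <= rk (e |: As))%N by rewrite mrk_mono ?subsetUr.
lia.
Qed.

Definition mclosure (A : {set E}) : {set E} := [set e | rk (e |: A) == rk A].

Lemma subset_mclosure (A : {set E}) : A \subset mclosure A.
Proof. by apply/subsetP=> e eA; rewrite inE (setUidPr _) ?sub1set. Qed.

Lemma rk_mclosure (A : {set E}) : rk (mclosure A) = rk A.
Proof.
rewrite -(setUidPr (subset_mclosure A)).
by apply: rk_setU_spanned => e; rewrite inE => /eqP.
Qed.

Lemma mclosure_flat (A : {set E}) : is_flat M (mclosure A).
Proof.
apply/forallP=> e; apply/implyP=> eNcl.
rewrite ltn_neqAle mrk_mono ?subsetUr // andbT.
apply: contra eNcl; rewrite rk_mclosure => /eqP rk_e.
rewrite inE eqn_leq [(rk A <= _)%N]mrk_mono ?subsetUr // andbT rk_e.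
exact/mrk_mono/setUS/subset_mclosure.
Qed.

Lemma mclosure_sub_flat (A F : {set E}) :
  is_flat M F -> A \subset F -> mclosure A \subset F.
Proof.
move=> flatF sAF; apply/subsetP=> e; rewrite inE => /eqP rk_e.
apply/negPn/negP=> eF.
have := mrk_submod M F (e |: A).
have -> : F :|: (e |: A) = e |: F by rewrite setUCA (setUidPl sAF).
have : (rk A <= rk (F :&: (e |: A)))%N.
  by rewrite mrk_mono // subsetI sAF subsetUr.
have := flat_rk_setU1 flatF eF; lia.
Qed.

Lemma flat_eq_mclosure (A F : {set E}) :
  is_flat M F -> A \subset F -> (rk F <= rk A)%N -> F = mclosure A.
Proof.
move=> flatF sAF rkFA; apply/eqP; rewrite eqEsubset mclosure_sub_flat // andbT.
apply/subsetP=> e eF; rewrite inE eqn_leq [(rk A <= _)%N]mrk_mono ?subsetUr // andbT.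
by apply: leq_trans rkFA; rewrite mrk_mono // subUset sub1set eF.
Qed.

Definition indep (A : {set E}) := rk A == #|A|.

Lemma rk_indep_subset (A B : {set E}) : indep B -> A \subset B -> rk A = #|A|.
Proof.
move=> /eqP indepB sAB.
have := mrk_submod M A (B :\: A).
have -> : A :|: (B :\: A) = B by rewrite -{2}(setID B A) (setIidPr sAB).
have -> : A :&: (B :\: A) = set0 by rewrite setDE setICA setICr setI0.
rewrite mrk0 indepB.
have := mrk_card M (B :\: A); have := mrk_card M A.
rewrite cardsD (setIidPr sAB); have := subset_leq_card sAB.
lia.
Qed.

Lemma exists_basis : exists2 B, indep B & rk B = rk setT.
Proof.
have indep0 : indep set0 by rewrite /indep mrk0 cards0.
have [B indepB maxB] := arg_maxnP (fun B : {set E} => #|B|) indep0.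
exists B => //; rewrite -(setUT B); symmetry; apply: rk_setU_spanned => e _.
have [eB|eNB] := boolP (e \in B); first by rewrite (setUidPr _) // sub1set.
apply/eqP; rewrite eqn_leq [(rk B <= _)%N]mrk_mono ?subsetUr // andbT.
rewrite leqNgt; apply/negP => rk_eB.
have indep_eB : indep (e |: B).
  by rewrite /indep cardsU1 eNB add1n -(eqP indepB) eqn_leq rk_setU1 rk_eB.
by have := maxB _ indep_eB; rewrite cardsU1 eNB add1n; lia.
Qed.

Lemma mclosure_indep_inj (B A1 A2 : {set E}) :
  indep B -> A1 \subset B -> A2 \subset B -> #|A1| = #|A2| ->
  mclosure A1 = mclosure A2 -> A1 = A2.
Proof.
move=> indepB sA1B sA2B cardA cl12.
have sA12 : A1 :|: A2 \subset mclosure A1.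
  by rewrite subUset subset_mclosure cl12 subset_mclosure.
have := mrk_mono M sA12.
rewrite rk_mclosure !(rk_indep_subset indepB) ?subUset ?sA1B // => card12.
have /eqP E1 : A1 == A1 :|: A2 by rewrite eqEcard subsetUl card12.
have /eqP E2 : A2 == A1 :|: A2 by rewrite eqEcard subsetUr -cardA card12.
by rewrite E1 -E2.
Qed.

Lemma binomial_le_N2 : ('C(mrank M, 2) <= N2 M)%N.
Proof.
have [B indepB rkB] := exists_basis.
pose sB := {x : E | x \in B}.
pose lift (A : {set sB}) : {set E} := [set val x | x in A].
have lift_sub A : lift A \subset B.
  by apply/subsetP=> x /imsetP [y _ ->]; apply: (valP y).
have card_lift A : #|lift A| = #|A| by rewrite card_imset //; apply: val_inj.
pose pairs := [set A : {set sB} | #|A| == 2%N].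
have <- : #|pairs| = 'C(mrank M, 2).
  by rewrite card_draws card_sig /mrank -rkB (eqP indepB).
rewrite -(card_in_imset (f := fun A => mclosure (lift A))); last first.
  move=> A1 A2; rewrite !inE => /eqP cA1 /eqP cA2 cl12.
  apply: (imset_inj val_inj).
  apply: (mclosure_indep_inj indepB (lift_sub A1) (lift_sub A2)) => //.
  by rewrite !card_lift cA1 cA2.
apply/subset_leq_card/subsetP => _ /imsetP [A + ->]; rewrite !inE => /eqP cardA.
by rewrite mclosure_flat rk_mclosure (rk_indep_subset indepB) ?lift_sub // card_lift cardA.
Qed.

Lemma flat_cover_eq_mclosure (T G : {set E}) j :
  is_flat M T -> j \notin T -> is_flat M G -> j \in G -> T \subset G ->
  rk G = (rk T).+1 -> G = mclosure (j |: T).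
Proof.
move=> flatT jNT flatG jG sTG rkG; apply: flat_eq_mclosure => //.
  by rewrite subUset sub1set jG.
by rewrite rkG flat_rk_setU1.
Qed.

Hypothesis loopM : loopless M.

Lemma flat_set0 : is_flat M set0.
Proof. by apply/forallP=> e; apply/implyP=> _; rewrite setU0 loopM mrk0. Qed.

Lemma rk_gt0 (F : {set E}) : F != set0 -> (0 < rk F)%N.
Proof. by case/set0Pn=> e eF; rewrite -(loopM e) mrk_mono ?sub1set. Qed.

End MatroidClosure.

Section IdealMembership.
Variables (E : finType) (g : seq (Pol E)).
Local Notation in_g := (in_ideal g).

Lemma in_idealMl p q : in_g q -> in_g (p * q).
Proof.
move=> [c [size_c ->]].
exists (mkseq (fun k => p * c`_k) (size g)); rewrite size_mkseq; split => //.
rewrite mulr_sumr; apply: eq_bigr => k _; by rewrite nth_mkseq // mulrA.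
Qed.

Lemma in_idealMr p q : in_g q -> in_g (q * p).
Proof. by rewrite mulrC; apply: in_idealMl. Qed.

Lemma mem_in_ideal p : p \in g -> in_g p.
Proof.
move=> pg; have ip : (index p g < size g)%N by rewrite index_mem.
exists (mkseq (fun k => (k == index p g)%:R) (size g)); rewrite size_mkseq; split => //.
rewrite (bigD1 (Ordinal ip)) //= big1 ?addr0 => [|k /eqP nk].
  by rewrite nth_mkseq // eqxx mul1r nth_index.
rewrite nth_mkseq // (_ : _ == _ = false) ?mul0r //.
by apply/negbTE/eqP => ki; apply: nk; exact: val_inj.
Qed.

End IdealMembership.

Section DegreeMap.
Variables (E : finType) (M : matroid E) (d : nat) (D : Pol E -> int).
Hypothesis degD : is_deg_map M d D.

Lemma deg_mapD p q : D (p + q) = D p + D q.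
Proof. by case: degD. Qed.

Lemma deg_map0 : D 0 = 0.
Proof. by have := deg_mapD 0 0; rewrite addr0; lia. Qed.

Lemma deg_mapN p : D (- p) = - D p.
Proof. by apply/eqP; rewrite -subr_eq0 opprK -deg_mapD addNr deg_map0. Qed.

Lemma deg_mapB p q : D (p - q) = D p - D q.
Proof. by rewrite deg_mapD deg_mapN. Qed.

Lemma deg_map_sum (I : Type) (r : seq I) (P : pred I) (F : I -> Pol E) :
  D (\sum_(x <- r | P x) F x) = \sum_(x <- r | P x) D (F x).
Proof. by apply: (big_morph D deg_mapD deg_map0). Qed.

Lemma deg_mapMn p k : D (p *+ k) = D p *+ k.
Proof. by elim: k => [|k IH]; rewrite ?mulr0n ?deg_map0 // !mulrS deg_mapD IH. Qed.

Lemma deg_mapZ (n : int) p : D (n *: p) = n * D p.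
Proof.
rewrite -[n in n *: _]intz scaler_int; case: n => k.
  by rewrite -pmulrn deg_mapMn -mulr_natl natz.
by rewrite NegzE mulrNz deg_mapN -pmulrn deg_mapMn -mulr_natl natz mulNr.
Qed.

Lemma deg_map_ideal p : p \is d.-homog -> in_ideal (gens M) p -> D p = 0.
Proof.
by case: degD => _ D_ideal _ p_homog; apply: D_ideal; rewrite /ishom -dhomogE.
Qed.

Lemma deg_map_eq_mod p q : p \is d.-homog -> q \is d.-homog ->
  in_ideal (gens M) (p - q) -> D p = D q.
Proof.
move=> p_homog q_homog /(deg_map_ideal (rpredB p_homog q_homog)).
by rewrite deg_mapB => /eqP; rewrite subr_eq0 => /eqP.
Qed.

End DegreeMap.

Section LowDegreeExpansion.
Variables (n : nat) (R : comNzRingType).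
Implicit Types p q r : {mpoly R[n]}.

Definition order_ge3 p := all (fun m => (3 <= mdeg m)%N) (msupp p).

Lemma order_ge3_0 : order_ge3 0.
Proof. by rewrite /order_ge3 msupp0. Qed.

Lemma order_ge3D p q : order_ge3 p -> order_ge3 q -> order_ge3 (p + q).
Proof.
move=> /allP ord_p /allP ord_q; apply/allP => m /msuppD_le.
by rewrite mem_cat => /orP[/ord_p|/ord_q].
Qed.

Lemma order_ge3Ml p r : order_ge3 r -> order_ge3 (p * r).
Proof.
move=> /allP ord_r; apply/allP => m /msuppM_le /allpairsP [[m1 m2] [/= _ m2r ->]].
by rewrite mdegD; have := ord_r _ m2r; lia.
Qed.

Lemma homog_order_ge3 k p : (3 <= k)%N -> p \is k.-homog -> order_ge3 p.
Proof. by move=> k_ge3 /dhomogP p_homog; apply/allP => m /p_homog /= ->. Qed.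

Lemma pihomog_order_ge3 k p : (k < 3)%N -> order_ge3 p -> pihomog mdeg k p = 0.
Proof.
move=> k_lt3 /allP ord_p; rewrite pihomogE big_seq_cond big1 // => m.
by case/andP => /ord_p /= ord_m /eqP deg_m; move: ord_m; rewrite deg_m; lia.
Qed.

Lemma prod_1D_expansion (ls : seq {mpoly R[n]}) :
  all (fun l => l \is 1.-homog) ls ->
  exists q r, [/\ \prod_(l <- ls) (1 + l) = 1 + \sum_(l <- ls) l + q + r,
    q \is 2.-homog, q *+ 2 = (\sum_(l <- ls) l) ^+ 2 - \sum_(l <- ls) l ^+ 2
    & order_ge3 r].
Proof.
elim: ls => [_|l ls IH /= /andP[l_homog ls_homog]].
  exists 0, 0; rewrite !big_nil expr0n /= !addr0 subr0 mul0rn.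
  by split; rewrite ?rpred0 ?order_ge3_0.
have [q [r [expand q_homog q2 ord_r]]] := IH ls_homog.
set s := \sum_(l <- ls) l in expand q2.
have s_homog : s \is 1.-homog by rewrite /s big_seq; apply: rpred_sum => x /(allP ls_homog).
exists (q + l * s), (r + l * q + l * r); rewrite !big_cons -/s; split.
- by rewrite expand; ring.
- by rewrite rpredD // (dhomogM l_homog s_homog).
- by rewrite mulrnDl q2; ring.
- rewrite order_ge3D ?order_ge3Ml // order_ge3D //.
  exact: (homog_order_ge3 _ (dhomogM l_homog q_homog)).
Qed.

Lemma pihomog_1D_expansion s q r :
  s \is 1.-homog -> q \is 2.-homog -> order_ge3 r ->
  pihomog mdeg 1 (1 + s + q + r) = s /\ pihomog mdeg 2 (1 + s + q + r) = q.
Proof.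
move=> s_homog q_homog ord_r; rewrite !pihomogD !(pihomog_order_ge3 _ ord_r) //.
rewrite (pihomog_dE s_homog) (pihomog_dE q_homog).
rewrite (pihomog_ne0 (d := 1) (b := 2) _ s_homog) //.
rewrite (pihomog_ne0 (d := 2) (b := 1) _ q_homog) //.
rewrite (pihomog_ne0 (d := 0) (b := 1) _ (dhomog1 _ _)) //.
rewrite (pihomog_ne0 (d := 0) (b := 2) _ (dhomog1 _ _)) //.
by rewrite !add0r !addr0.
Qed.

End LowDegreeExpansion.

Lemma hpartE (E : finType) k (p : Pol E) : hpart k p = pihomog mdeg k p.
Proof. by rewrite pihomogE. Qed.

Lemma sum_indicator_pred1 {R : pzSemiRingType} (T : finType) (P Q : pred T) x0 :
  (forall x, P x && Q x = (x == x0)) -> \sum_(x | P x) (Q x)%:R = 1 :> R.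
Proof.
move=> PQ; rewrite (bigID Q) /= [X in _ + X]big1 => [|x /andP[_ /negbTE->] //].
rewrite addr0; under eq_bigl => x do rewrite PQ.
rewrite big_pred1_eq.
by have := PQ x0; rewrite eqxx => /andP[_ ->].
Qed.

Lemma bin2_double n : ('C(n, 2) * 2 = n * n.-1)%N.
Proof.
elim: n => [|n IH] //; rewrite binS bin1 mulnDl IH.
by case: n {IH} => [|n] //=; lia.
Qed.

Section ChowDegree.
Variables (E : finType) (M : matroid E) (d : nat) (i : E) (D : Pol E -> int).
Hypothesis loopM : loopless M.
Hypothesis rkM : mrank M = d.+1.
Hypothesis d_ge2 : (2 <= d)%N.
Hypothesis degD : is_deg_map M d D.
Local Notation rk := (mrk M).
Local Notation in_I := (in_ideal (gens M)).
Local Notation al := (alpha M i).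
Local Notation Z := (Zk M).

Definition xprod (s : seq {set E}) : Pol E := \prod_(F <- s) xv F.

Lemma xv_homog (F : {set E}) : xv F \is 1.-homog.
Proof. by rewrite dhomogX /= mdeg1. Qed.

Lemma xprod_homog s : xprod s \is (size s).-homog.
Proof.
elim: s => [|F s IH]; rewrite /xprod ?big_nil ?big_cons; first exact: dhomog1.
exact: (dhomogM (xv_homog F) IH).
Qed.

Lemma sum_xv_homog (P : pred {set E}) : \sum_(F | P F) xv F \is 1.-homog.
Proof. by apply: rpred_sum => F _; apply: xv_homog. Qed.

Lemma sum_ni_homog j : sum_ni M j \is 1.-homog.
Proof. exact: sum_xv_homog. Qed.

Lemma alpha_expn_homog n : al ^+ n \is n.-homog.
Proof. by have := dhomogMn n (sum_ni_homog i); rewrite mul1n. Qed.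

Lemma in_ideal_sum_niB j k : in_I (sum_ni M j - sum_ni M k).
Proof.
apply: mem_in_ideal; rewrite !mem_cat; apply/or3P; apply: Or32.
by apply: (allpairs_f (fun a b => sum_ni M a - sum_ni M b)); rewrite mem_enum.
Qed.

Lemma in_ideal_incomparable (F G : {set E}) : npflat M F -> npflat M G ->
  ~~ (F \subset G) -> ~~ (G \subset F) -> in_I (xv F * xv G).
Proof.
move=> npF npG sFG sGF; apply: mem_in_ideal; rewrite !mem_cat; apply/or3P; apply: Or31.
apply: (allpairs_f_dep (fun F G => xv F * xv G)); rewrite mem_enum //.
by rewrite inE npG negb_or sFG sGF.
Qed.

Lemma deg_alpha_eq_sum_ni j p : p \is d.-1.-homog -> D (al * p) = D (sum_ni M j * p).
Proof.
move=> p_homog; have homog_d q : q \is 1.-homog -> q * p \is d.-homog.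
  by move/dhomogM/(_ p_homog); rewrite add1n prednK // ltnW.
apply: (deg_map_eq_mod degD); rewrite ?homog_d ?sum_ni_homog //.
by rewrite -mulrBl; apply/in_idealMr/in_ideal_sum_niB.
Qed.

Lemma npflat_rk (F : {set E}) : npflat M F -> (0 < rk F <= d)%N.
Proof.
case/and3P=> flatF F0 FT; rewrite rk_gt0 //= -ltnS -rkM.
by apply: flat_rk_proper; rewrite ?properT.
Qed.

Definition proper_rel : rel {set E} := fun F G => F \proper G.

Definition flag (s : seq {set E}) := path proper_rel set0 s && all (npflat M) s.

Lemma flag_rcons s G :
  flag (rcons s G) = [&& flag s, npflat M G & last set0 s \proper G].
Proof. by rewrite /flag rcons_path all_rcons -!andbA; do !bool_congr. Qed.

Lemma flag1 G : npflat M G -> flag [:: G].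
Proof.
by move=> npG; rewrite /flag /= /proper_rel proper0 npG !andbT; case/and3P: npG.
Qed.

Lemma flag_top s : flag s -> is_flat M (last set0 s) && (last set0 s != setT).
Proof.
case/andP=> _ /allP np_s; have := mem_last set0 s; rewrite inE => /orP[/eqP->|/np_s].
  by rewrite flat_set0 //=; apply/eqP => /setP /(_ i); rewrite !inE.
by case/and3P=> -> _ ->.
Qed.

Lemma path_proper_rk (F : {set E}) s : is_flat M F -> all (is_flat M) s ->
  path proper_rel F s -> (rk F + size s <= rk (last F s))%N.
Proof.
elim: s F => [|G s IH] F flatF /=; first by rewrite addn0.
case/andP=> flatG flat_s /andP[FG path_s].
have := flat_rk_proper flatF FG; have := IH G flatG flat_s path_s; lia.
Qed.

Lemma flag_rk_top s : flag s -> (size s <= rk (last set0 s) <= d)%N.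
Proof.
move=> flag_s; have /andP[flatT TnT] := flag_top flag_s.
have -> : (rk (last set0 s) <= d)%N.
  by rewrite -ltnS -rkM; apply: flat_rk_proper; rewrite ?properT.
case/andP: flag_s => path_s /allP np_s; rewrite andbT.
have flat_s : all (is_flat M) s by apply/allP => F /np_s /and3P[].
by have := path_proper_rk (flat_set0 loopM) flat_s path_s; rewrite mrk0.
Qed.

Lemma deg_full_flag s : flag s -> size s = d -> D (xprod s) = 1.
Proof.
move=> /andP[path_s np_s] size_s; case: degD => _ _ D_flag.
have -> : xprod s = \prod_(k < d) xv (nth set0 s k).
  by rewrite /xprod (big_nth set0) big_mkord size_s.
apply: D_flag => [k|k l kl]; first by apply: (all_nthP set0 np_s); rewrite size_s.
apply: (sorted_ltn_nth (leT := proper_rel) _ set0 (path_sorted path_s)) => //.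
- by move=> F G H; apply: proper_trans.
- by rewrite inE size_s.
- by rewrite inE size_s.
Qed.

Lemma deg_alpha_flag_succ n s j : flag s -> (size s + n.+1)%N = d ->
  j \notin last set0 s ->
  D (al ^+ n.+1 * xprod s) =
  \sum_(G | npflat M G && (j \in G) && (last set0 s \proper G))
    D (al ^+ n * xprod (rcons s G)).
Proof.
move=> flag_s size_s jNT; set T := last set0 s.
have homog_d G : xv G * (al ^+ n * xprod s) \is d.-homog.
  have -> : d = (1 + (n + size s))%N by rewrite -size_s; lia.
  exact: dhomogM (xv_homog G) (dhomogM (alpha_expn_homog n) (xprod_homog s)).
rewrite exprS -mulrA (deg_alpha_eq_sum_ni j); last first.
  have -> : d.-1 = (n + size s)%N by rewrite -size_s; lia.
  exact: dhomogM (alpha_expn_homog n) (xprod_homog s).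
rewrite /sum_ni mulr_suml (deg_map_sum degD).
rewrite (bigID [pred G : {set E} | T \proper G]) /=.
(* As j \notin T, a flat containing j but not strictly containing T is
   incomparable with T. *)
rewrite [X in _ + X]big1 ?addr0 => [|G /andP[/andP[npG jG] TnG]].
  apply: eq_bigr => G _; congr D.
  by rewrite /xprod -cats1 big_cat big_seq1 /=; ring.
have : T \in set0 :: s := mem_last set0 s.
rewrite inE => /orP[/eqP T0|Ts].
  by move: TnG npG; rewrite T0 proper0 negbK => /eqP ->; rewrite /npflat eqxx andbF.
apply: (deg_map_ideal degD (homog_d G)).
rewrite /xprod (big_rem _ Ts) /=; set R := \prod_(_ <- _) _.
have -> : xv G * (al ^+ n * (xv T * R)) = al ^+ n * R * (xv G * xv T) by ring.
apply: in_idealMl; apply: in_ideal_incomparable => //.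
- exact: (allP (proj2 (andP flag_s))).
- by apply/subsetPn; exists j.
- apply: contra TnG => sTG; rewrite properEneq sTG andbT.
  by apply/eqP => TG; move: jNT; rewrite -/T TG jG.
Qed.

Lemma flag_cover_unique s j G : flag s -> rk (last set0 s) = size s ->
  (size s < d)%N -> j \notin last set0 s ->
  npflat M G && (j \in G) && (last set0 s \proper G) && (rk G == (size s).+1)
  = (G == mclosure M (j |: last set0 s)).
Proof.
move=> flag_s rkT size_lt jNT; set T := last set0 s.
have /andP[flatT _] := flag_top flag_s.
have rk_jT : rk (j |: T) = (size s).+1 by rewrite flat_rk_setU1 ?rkT.
apply/idP/eqP => [/andP[/andP[/andP[npG jG] TG] /eqP rkG] | ->].
  apply: flat_cover_eq_mclosure => //; first by case/and3P: npG.
    exact: proper_sub.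
  by rewrite rkG rkT.
set C := mclosure M (j |: T).
have jC : j \in C by rewrite (subsetP (subset_mclosure _ _)) ?setU11.
have rkC : rk C = (size s).+1 by rewrite rk_mclosure.
rewrite rkC eqxx jC /npflat mclosure_flat /= !andbT -andbA; apply/and3P; split.
- by apply/set0Pn; exists j.
- by apply: contraTneq size_lt => CT; rewrite -ltnS -rkC CT -rkM ltnn.
- apply/properP; split; last by exists j.
  exact: subset_trans (subsetUr _ _) (subset_mclosure _ _).
Qed.

Lemma deg_alpha_flag n s : flag s -> (size s + n)%N = d ->
  D (al ^+ n * xprod s) = (rk (last set0 s) == size s)%:R.
Proof.
elim: n s => [|n IH] s flag_s size_s.
  rewrite addn0 in size_s; rewrite mul1r deg_full_flag //.
  by have := flag_rk_top flag_s; rewrite size_s -eqn_leq => /eqP <-; rewrite eqxx.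
set T := last set0 s; have /andP[flatT TnT] := flag_top flag_s.
have /subsetPn [j _ jNT] : ~~ (setT \subset T) by rewrite subTset.
rewrite (deg_alpha_flag_succ flag_s size_s jNT).
rewrite (eq_bigr (fun G => (rk G == (size s).+1)%:R)) => [|G /andP[/andP[npG _] TG]];
  last by rewrite IH ?last_rcons ?size_rcons ?flag_rcons ?flag_s ?npG ?TG // addSnnS.
have [rkT|rkT] := eqVneq (rk T) (size s).
  apply: (sum_indicator_pred1 (x0 := mclosure M (j |: T))) => G.
  by apply: flag_cover_unique; rewrite // -size_s; lia.
rewrite big1 // => G /andP[_ TG]; have := flat_rk_proper flatT TG.
have := flag_rk_top flag_s; rewrite -/T; case: eqP => // ->; move: rkT; lia.
Qed.

Definition bform (p q : Pol E) : int := D (p * q * al ^+ (d - 2)).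

Lemma bformC p q : bform p q = bform q p.
Proof. by rewrite /bform (mulrC p q). Qed.

Lemma bformDl p p' q : bform (p + p') q = bform p q + bform p' q.
Proof. by rewrite /bform !mulrDl (deg_mapD degD). Qed.

Lemma bformZl (n : int) p q : bform (n *: p) q = n * bform p q.
Proof. by rewrite /bform -!scalerAl (deg_mapZ degD). Qed.

Lemma bform_suml (I : Type) (r : seq I) (P : pred I) (F : I -> Pol E) q :
  bform (\sum_(x <- r | P x) F x) q = \sum_(x <- r | P x) bform (F x) q.
Proof. by rewrite /bform !mulr_suml (deg_map_sum degD). Qed.

Lemma bformDr p q q' : bform p (q + q') = bform p q + bform p q'.
Proof. by rewrite !(bformC p) bformDl. Qed.

Lemma bformZr (n : int) p q : bform p (n *: q) = n * bform p q.
Proof. by rewrite !(bformC p) bformZl. Qed.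

Lemma bform_sumr (I : Type) (r : seq I) (P : pred I) (F : I -> Pol E) p :
  bform p (\sum_(x <- r | P x) F x) = \sum_(x <- r | P x) bform p (F x).
Proof. by rewrite bformC bform_suml; apply: eq_bigr => x _; rewrite bformC. Qed.

Lemma bform_homog p q : p \is 1.-homog -> q \is 1.-homog ->
  p * q * al ^+ (d - 2) \is d.-homog.
Proof.
move=> p_homog q_homog.
by have := dhomogM (dhomogM p_homog q_homog) (alpha_expn_homog (d - 2)); rewrite subnKC.
Qed.

Lemma bform_alpha_alpha : bform al al = 1.
Proof.
rewrite /bform; have -> : al * al * al ^+ (d - 2) = al ^+ d * xprod [::].
  by rewrite /xprod big_nil mulr1 -mulrA -!exprS -addn2 subnK.
by rewrite deg_alpha_flag ?mrk0.
Qed.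

Lemma bform_alpha_x G : npflat M G -> bform al (xv G) = (rk G == 1%N)%:R.
Proof.
rewrite /bform => npG; have -> : al * xv G * al ^+ (d - 2) = al ^+ d.-1 * xprod [:: G].
  by rewrite /xprod big_seq1 mulrAC -exprS -subSn // subn2.
by rewrite deg_alpha_flag ?flag1 //= add1n prednK // ltnW.
Qed.

Lemma bform_x_proper F G : npflat M F -> npflat M G -> F \proper G ->
  bform (xv F) (xv G) = (rk G == 2)%:R.
Proof.
rewrite /bform => npF npG FG.
have -> : xv F * xv G * al ^+ (d - 2) = al ^+ (d - 2) * xprod [:: F; G].
  by rewrite /xprod !big_cons big_nil mulr1 mulrC.
by rewrite deg_alpha_flag ?(flag_rcons [:: F]) ?flag1 ?npG //= subnKC.
Qed.

Lemma bform_x_incomparable F G : npflat M F -> npflat M G ->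
  ~~ (F \subset G) -> ~~ (G \subset F) -> bform (xv F) (xv G) = 0.
Proof.
move=> npF npG sFG sGF; apply: (deg_map_ideal degD).
  exact: bform_homog (xv_homog F) (xv_homog G).
by apply: in_idealMr; apply: in_ideal_incomparable.
Qed.

Lemma bform_alpha_x_sum F j : bform al (xv F) =
  \sum_(G | npflat M G && (j \in G)) bform (xv G) (xv F).
Proof.
rewrite /bform -mulrA (deg_alpha_eq_sum_ni j); last first.
  have -> : d.-1 = (1 + (d - 2))%N by lia.
  exact: dhomogM (xv_homog F) (alpha_expn_homog (d - 2)).
by rewrite mulr_suml (deg_map_sum degD); apply: eq_bigr => G _; rewrite mulrA.
Qed.

Lemma bform_x_self F j : npflat M F -> j \in F ->
  bform (xv F) (xv F) = (rk F == 1%N)%:R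
    - \sum_(G | npflat M G && (j \in G) && (G \proper F)) (rk F == 2%N)%:R
    - \sum_(G | npflat M G && (j \in G) && (F \proper G)) (rk G == 2%N)%:R.
Proof.
move=> npF jF.
have := bform_alpha_x_sum F j; rewrite (bform_alpha_x npF) (bigD1 F) ?npF ?jF //=.
suff -> : \sum_(G | npflat M G && (j \in G) && (G != F)) bform (xv G) (xv F) =
  \sum_(G | npflat M G && (j \in G) && (G \proper F)) (rk F == 2%N)%:R
  + \sum_(G | npflat M G && (j \in G) && (F \proper G)) (rk G == 2%N)%:R.
  by move=> ->; ring.
rewrite (bigID [pred G : {set E} | G \proper F]) /=; congr (_ + _).
  apply: eq_big => G.
    by case GF: (G \proper F); rewrite ?(proper_neq GF) ?andbF ?andbT.
  by case/andP=> /andP[/andP[npG _] _] GF; apply: bform_x_proper.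
rewrite (bigID [pred G : {set E} | F \proper G]) /= [X in _ + X]big1 ?addr0.
  apply: eq_big => G.
    case FG: (F \proper G); rewrite ?andbF //= andbT eq_sym (proper_neq FG) andbT.
    suff -> : ~~ (G \proper F) by rewrite andbT.
    by apply/negP => /(proper_trans FG); rewrite properxx.
  by case/andP=> /andP[/andP[/andP[npG _] _] _] FG; rewrite bformC bform_x_proper.
move=> G /andP[/andP[/andP[/andP[npG _] GnF] nGF] nFG].
apply: bform_x_incomparable => //.
  by apply: contra nGF => sGF; rewrite properEneq GnF.
by apply: contra nFG => sFG; rewrite properEneq eq_sym GnF.
Qed.

Definition nflats k : int := \sum_(G | npflat M G && (rk G == k)) 1.

Definition nflags12 : int := \sum_(F | npflat M F && (rk F == 1%N))
  \sum_(G | npflat M G && (rk G == 2%N)) (F \proper G)%:R.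

Lemma npflat_rk_proper (F G : {set E}) : npflat M F -> F \proper G -> (rk F < rk G)%N.
Proof. by case/and3P=> flatF _ _; apply: flat_rk_proper. Qed.

Lemma bform_x_same_rk (F G : {set E}) : npflat M F -> npflat M G -> F != G ->
  rk F = rk G -> bform (xv F) (xv G) = 0.
Proof.
have not_sub (A B : {set E}) : npflat M A -> A != B -> rk A = rk B -> ~~ (A \subset B).
  move=> npA AnB rkAB; apply/negP => sAB.
  by have := npflat_rk_proper npA (G := B); rewrite rkAB ltnn properEneq AnB sAB => /(_ isT).
by move=> npF npG FnG rkFG; apply: bform_x_incomparable; rewrite ?not_sub // eq_sym.
Qed.

Lemma npflat_exists_mem (F : {set E}) : npflat M F -> exists j, j \in F.
Proof. by case/and3P=> _ /set0Pn. Qed.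

Lemma bform_alpha_Z k : bform al (Z k) = (k == 1%N)%:R * nflats k.
Proof.
rewrite /Zk bform_sumr /nflats mulr_sumr.
by apply: eq_bigr => G /andP[npG /eqP <-]; rewrite bform_alpha_x // mulr1.
Qed.

Lemma bform_Z_diag k :
  bform (Z k) (Z k) = \sum_(F | npflat M F && (rk F == k)) bform (xv F) (xv F).
Proof.
rewrite /Zk bform_suml; apply: eq_bigr => F /andP[npF /eqP rkF].
rewrite bform_sumr (bigD1 F) ?npF ?rkF //= big1 ?addr0 // => G.
by case/andP=> /andP[npG /eqP rkG] GnF; rewrite bform_x_same_rk // 1?eq_sym // rkF rkG.
Qed.

Lemma bform_Z1Z1 : bform (Z 1) (Z 1) = nflats 1 - nflags12.
Proof.
rewrite bform_Z_diag /nflats /nflags12 -sumrB; apply: eq_bigr => F /andP[npF /eqP rkF].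
have [j jF] := npflat_exists_mem npF.
rewrite (bform_x_self npF jF) rkF big1 // subr0; congr (_ - _).
rewrite big_mkcond [RHS]big_mkcond; apply: eq_bigr => G _ /=.
case: (npflat M G) => //=; case FG: (F \proper G); last by rewrite andbF if_same.
by rewrite (subsetP (proper_sub FG) _ jF); case: (rk G == 2%N).
Qed.

Lemma bform_Z1Z2 : bform (Z 1) (Z 2) = nflags12.
Proof.
rewrite /Zk bform_suml; apply: eq_bigr => F /andP[npF /eqP rkF].
rewrite bform_sumr; apply: eq_bigr => G /andP[npG /eqP rkG].
have [FG|FnG] := boolP (F \proper G); first by rewrite bform_x_proper // rkG.
apply: bform_x_incomparable => //.
  apply: contra FnG => sFG; rewrite properEneq sFG andbT.
  by apply/eqP => FG; move: rkF; rewrite FG rkG.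
by apply/negP => /(mrk_mono M); rewrite rkF rkG.
Qed.

Lemma bform_Z2Z2 : bform (Z 2) (Z 2) = - nflats 2.
Proof.
rewrite bform_Z_diag /nflats -sumrN; apply: eq_bigr => F /andP[npF /eqP rkF].
have [j jF] := npflat_exists_mem npF.
rewrite (bform_x_self npF jF) rkF [X in _ - X]big1 => [|G /andP[_ FG]]; last first.
  by have := npflat_rk_proper npF FG; rewrite rkF; case: eqP => // ->.
rewrite subr0 sub0r; congr (- _).
apply: (sum_indicator_pred1 (x0 := mclosure M [set j])) => G /=; rewrite andbT.
have rk_jcl : rk (mclosure M [set j]) = 1%N by rewrite rk_mclosure loopM.
apply/idP/eqP => [/andP[/andP[npG jG] GF]|->].
  apply: flat_eq_mclosure; [by case/and3P: npG | by rewrite sub1set | ].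
  by have := npflat_rk_proper npG GF; have := npflat_rk npG; rewrite loopM rkF; lia.
rewrite (subsetP (subset_mclosure _ _)) ?set11 // andbT /npflat mclosure_flat /=.
rewrite -andbA; apply/and3P; split.
- by apply/set0Pn; exists j; rewrite (subsetP (subset_mclosure _ _)) ?set11.
- by apply: contraTneq d_ge2 => clT; rewrite -ltnS -rkM /mrank -clT rk_jcl.
- have flatF : is_flat M F by case/and3P: npF.
  rewrite properEneq mclosure_sub_flat ?sub1set // andbT.
  by apply/eqP => clF; move: rk_jcl; rewrite clF rkF.
Qed.

Lemma bform_x_high F G : npflat M F -> (3 <= rk F)%N -> npflat M G ->
  bform (xv F) (xv G) = 0.
Proof.
move=> npF rkF npG.
have rk_lt k : (k < 3)%N -> (rk F == k) = false by move=> k_lt; apply/eqP; lia.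
have [FG|FnG] := boolP (F \proper G).
  by rewrite bform_x_proper //; have := npflat_rk_proper npF FG; case: eqP => // ->; lia.
have [GF|GnF] := boolP (G \proper F); first by rewrite bformC bform_x_proper // rk_lt.
have [<-|FneG] := eqVneq F G; last first.
  apply: bform_x_incomparable => //.
    by apply: contra FnG => sFG; rewrite properEneq FneG.
  by apply: contra GnF => sGF; rewrite properEneq eq_sym FneG.
have [j jF] := npflat_exists_mem npF.
rewrite (bform_x_self npF jF) !rk_lt // big1 // [X in _ - X]big1 ?subrr // => H /andP[_ FH].
by have := npflat_rk_proper npF FH; case: eqP => // ->; lia.
Qed.

Definition high_span (h : Pol E) :=
  exists c : {set E} -> int, h = \sum_(G | npflat M G && (3 <= rk G)%N) c G *: xv G.

Lemma high_span0 : high_span 0.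
Proof. by exists (fun=> 0); rewrite big1 // => G _; rewrite scale0r. Qed.

Lemma high_spanD h h' : high_span h -> high_span h' -> high_span (h + h').
Proof.
move=> [c ->] [c' ->]; exists (fun G => c G + c' G).
by rewrite -big_split; apply: eq_bigr => G _; rewrite scalerDl.
Qed.

Lemma high_spanN h : high_span h -> high_span (- h).
Proof.
move=> [c ->]; exists (fun G => - c G).
by rewrite -sumrN; apply: eq_bigr => G _; rewrite scaleNr.
Qed.

Lemma high_span_Z k : (3 <= k)%N -> high_span (Z k).
Proof.
move=> k_ge3; exists (fun G => (rk G == k)%:R).
rewrite /Zk big_mkcond [RHS]big_mkcond; apply: eq_bigr => G _.
case: (npflat M G) => //=; case: eqP => [->|_]; first by rewrite k_ge3 scale1r.
by rewrite scale0r if_same.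
Qed.

Lemma bform_high_x h G : high_span h -> npflat M G -> bform h (xv G) = 0.
Proof.
move=> [c ->] npG; rewrite bform_suml big1 // => F /andP[npF rkF].
by rewrite bformZl bform_x_high ?mulr0.
Qed.

Lemma bform_high_sum h (P : pred {set E}) : high_span h ->
  (forall G, P G -> npflat M G) -> bform h (\sum_(G | P G) xv G) = 0.
Proof.
by move=> hh npP; rewrite bform_sumr big1 // => G /npP; apply: bform_high_x.
Qed.

Lemma bform_high_high h h' : high_span h -> high_span h' -> bform h h' = 0.
Proof.
move=> hh [c ->]; rewrite bform_sumr big1 // => G /andP[npG _].
by rewrite bformZr bform_high_x ?mulr0.
Qed.

(* Coordinates on [al], [Z 1], [Z 2] modulo the [x_F] with [rk F >= 3], which
   [bform] does not see. *)
Definition has_coords (l : Pol E) (u a b : int) :=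
  exists2 h, high_span h & l = u *: al + a *: Z 1 + b *: Z 2 + h.

Lemma has_coords0 : has_coords 0 0 0 0.
Proof. by exists 0; [apply: high_span0 | rewrite !scale0r !addr0]. Qed.

Lemma has_coordsD l u a b l' u' a' b' : has_coords l u a b -> has_coords l' u' a' b' ->
  has_coords (l + l') (u + u') (a + a') (b + b').
Proof.
move=> [h hh ->] [h' hh' ->]; exists (h + h'); first exact: high_spanD.
by rewrite !scalerDl; ring.
Qed.

Lemma has_coordsB l u a b l' u' a' b' : has_coords l u a b -> has_coords l' u' a' b' ->
  has_coords (l - l') (u - u') (a - a') (b - b').
Proof.
move=> [h hh ->] [h' hh' ->]; exists (h - h'); first exact/high_spanD/high_spanN.
by rewrite !scalerBl; ring.
Qed.

Lemma has_coords_alpha : has_coords al 1 0 0.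
Proof. by exists 0; [apply: high_span0 | rewrite scale1r !scale0r !addr0]. Qed.

Lemma Zk0 : Z 0 = 0.
Proof.
rewrite /Zk big1 // => G /andP[npG /eqP rkG].
by have := npflat_rk npG; rewrite rkG.
Qed.

Lemma has_coords_Z k : has_coords (Z k) 0 (k == 1)%N%:R (k == 2)%N%:R.
Proof.
case: k => [|[|[|k]]] /=.
- by rewrite Zk0; apply: has_coords0.
- by exists 0; [apply: high_span0 | rewrite !scale0r scale1r add0r !addr0].
- by exists 0; [apply: high_span0 | rewrite !scale0r scale1r !add0r addr0].
- by exists (Z k.+3); [apply: high_span_Z | rewrite !scale0r !add0r].
Qed.

Lemma bform_coords l u a b l' u' a' b' :
  has_coords l u a b -> has_coords l' u' a' b' ->
  bform l l' = u * u' + nflats 1 * (u * a' + a * u') + (nflats 1 - nflags12) * a * a'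
    + nflags12 * (a * b' + b * a') - nflats 2 * b * b'.
Proof.
move=> [h hh ->] [h' hh' ->].
have h_al : bform h al = 0 by apply: bform_high_sum => // G /andP[].
have h_Z k : bform h (Z k) = 0 by apply: bform_high_sum => // G /andP[].
have al_h' : bform al h' = 0 by rewrite bformC; apply: bform_high_sum => // G /andP[].
have Z_h' k : bform (Z k) h' = 0 by rewrite bformC; apply: bform_high_sum => // G /andP[].
rewrite !(bformDl, bformDr, bformZl, bformZr) h_al !h_Z al_h' !Z_h' (bform_high_high hh hh').
rewrite [bform (Z 1) al]bformC [bform (Z 2) al]bformC [bform (Z 2) (Z 1)]bformC.
rewrite bform_alpha_alpha !bform_alpha_Z bform_Z1Z1 bform_Z1Z2 bform_Z2Z2 /= mul1r !mul0r.
ring.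
Qed.

Definition Ztop k : Pol E := \sum_(1 <= j < k.+1) Z (d.+1 - j).

Definition chern_factors : seq (Pol E) :=
  [seq Z k | k <- index_iota 1 d.+1] ++ [seq al - Ztop k | k <- index_iota 0 d.+1].

Lemma cM_chern_factors : cM M d i = \prod_(l <- chern_factors) (1 + l).
Proof.
rewrite /cM /chern_factors big_cat !big_map; congr (_ * _).
by apply: eq_bigr => k _; rewrite addrA.
Qed.

Lemma chern_factors_homog : all (fun l => l \is 1.-homog) chern_factors.
Proof.
apply/allP => l; rewrite mem_cat => /orP[] /mapP [k _ ->]; first exact: sum_xv_homog.
by rewrite rpredB ?sum_ni_homog // rpred_sum // => j _; apply: sum_xv_homog.
Qed.

Lemma has_coords_sum_const (r : seq nat) (f : nat -> Pol E) u a b :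
  (forall k, k \in r -> has_coords (f k) u a b) ->
  has_coords (\sum_(k <- r) f k) (u *+ size r) (a *+ size r) (b *+ size r).
Proof.
elim: r => [|k r IH] coords_r; first by rewrite big_nil !mulr0n; apply: has_coords0.
rewrite big_cons !mulrS; apply: has_coordsD; first by apply: coords_r; rewrite mem_head.
by apply: IH => j jr; apply: coords_r; rewrite inE jr orbT.
Qed.

Lemma has_coords_Ztop k : (k <= d)%N ->
  has_coords (Ztop k) 0 (k == d)%:R (d.-1 <= k)%N%:R.
Proof.
elim: k => [|k IH] k_le.
  have [-> ->] : (0 == d) = false /\ (d.-1 <= 0)%N = false by split; lia.
  by rewrite /Ztop big_geq //; apply: has_coords0.
have := has_coordsD (IH (ltnW k_le)) (has_coords_Z (d - k)).
rewrite addr0 -!natrD.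
have [-> ->] : ((k == d) + (d - k == 1) = (k.+1 == d))%N /\
  ((d.-1 <= k) + (d - k == 2) = (d.-1 <= k.+1))%N by split; lia.
by move=> c; rewrite /Ztop big_nat_recr //= -/(Ztop k) subSS.
Qed.

Lemma has_coords_alpha_Ztop k : (k <= d)%N ->
  has_coords (al - Ztop k) 1 (- (k == d)%:R) (- (d.-1 <= k)%N%:R).
Proof.
move=> k_le; have := has_coordsB has_coords_alpha (has_coords_Ztop k_le).
by rewrite subr0 !sub0r.
Qed.

Lemma sum_chern_factorsE (V : nmodType) (phi : Pol E -> V) :
  \sum_(l <- chern_factors) phi l =
    phi (Z 1) + phi (Z 2) + \sum_(3 <= k < d.+1) phi (Z k)
    + \sum_(0 <= k < d.-1) phi (al - Ztop k) + phi (al - Ztop d.-1) + phi (al - Ztop d).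
Proof.
have d_gt0 : (0 < d)%N by apply: ltnW.
rewrite big_cat !big_map /=.
have -> : \sum_(1 <= k < d.+1) phi (Z k) =
    phi (Z 1) + phi (Z 2) + \sum_(3 <= k < d.+1) phi (Z k).
  by rewrite big_ltn // big_ltn // addrA.
have -> : \sum_(0 <= k < d.+1) phi (al - Ztop k) = \sum_(0 <= k < d.-1) phi (al - Ztop k)
    + phi (al - Ztop d.-1) + phi (al - Ztop d).
  by rewrite big_nat_recr //= -{1}(prednK d_gt0) big_nat_recr //= prednK.
by rewrite !addrA.
Qed.

Lemma has_coords_sum_chern_factors :
  has_coords (\sum_(l <- chern_factors) l) d.+1%:R 0 (-1).
Proof.
have c_high : has_coords (\sum_(3 <= k < d.+1) Z k) 0 0 0.
  have := @has_coords_sum_const (index_iota 3 d.+1) Z 0 0 0.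
  rewrite !mul0rn; apply=> k; rewrite mem_index_iota => /andP[k_ge3 _].
  have := has_coords_Z k.
  by have [-> ->] : (k == 1)%N = false /\ (k == 2)%N = false by split; lia.
have c_low : has_coords (\sum_(0 <= k < d.-1) (al - Ztop k)) d.-1%:R 0 0.
  have := @has_coords_sum_const (index_iota 0 d.-1) (fun k => al - Ztop k) 1 0 0.
  rewrite !mul0rn size_iota subn0; apply=> k; rewrite mem_index_iota => /andP[_ k_lt].
  have k_le : (k <= d)%N by lia.
  have := has_coords_alpha_Ztop k_le.
  by have [-> ->] : (k == d) = false /\ (d.-1 <= k)%N = false by split; lia.
have := has_coordsD (has_coordsD (has_coordsD (has_coordsD (has_coordsD
  (has_coords_Z 1) (has_coords_Z 2)) c_high) c_low)
  (has_coords_alpha_Ztop (leq_pred d))) (has_coords_alpha_Ztop (leqnn d)).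
rewrite -(sum_chern_factorsE (fun l => l)) => -[h hh ->]; exists h => //.
by congr (_ *: _ + _ *: _ + _ *: _ + _); lia.
Qed.

Lemma sum_bform_chern_factors :
  \sum_(l <- chern_factors) bform l l = d.+1%:R - 3%:R * nflats 2.
Proof.
rewrite (sum_chern_factorsE (fun l => bform l l)) big_nat big1 => [|k /andP[k_ge3 _]].
  rewrite big_nat (eq_bigr (fun=> 1)) => [|k /andP[_ k_lt]].
    rewrite -big_nat sumr_const_nat subn0 addr0.
    rewrite !(bform_coords (has_coords_Z _) (has_coords_Z _)).
    have c_pred := has_coords_alpha_Ztop (leq_pred d).
    have c_top := has_coords_alpha_Ztop (leqnn d).
    rewrite (bform_coords c_pred c_pred) (bform_coords c_top c_top).
    have [-> ->] : (d.-1 == d) = false /\ d.+1%:R = d.-1%:R + 2%:R :> int by split; lia.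
    rewrite !eqxx leqnn leq_pred /=; ring.
  have k_le : (k <= d)%N by lia.
  rewrite (bform_coords (has_coords_alpha_Ztop k_le) (has_coords_alpha_Ztop k_le)).
  have [-> ->] : (k == d) = false /\ (d.-1 <= k)%N = false by split; lia.
  rewrite /=; ring.
rewrite (bform_coords (has_coords_Z k) (has_coords_Z k)).
have [-> ->] : (k == 1)%N = false /\ (k == 2)%N = false by split; lia.
rewrite /=; ring.
Qed.

Lemma bform_sum_chern_factors :
  bform (\sum_(l <- chern_factors) l) (\sum_(l <- chern_factors) l)
  = d.+1%:R ^+ 2 - nflats 2.
Proof.
rewrite (bform_coords has_coords_sum_chern_factors has_coords_sum_chern_factors); ring.
Qed.

Lemma nflats2E : nflats 2 = (N2 M)%:R.
Proof.
rewrite /nflats /N2 (eq_bigr (fun=> 1%N%:R)) // -natr_sum sum1dep_card; congr _%:R.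
apply: eq_card => F; rewrite !inE /npflat.
have [rkF|] := eqVneq (rk F) 2; rewrite ?andbF ?andbT //.
case: (is_flat M F) => //=; apply/andP; split; apply/eqP => F0T; move: rkF.
  by rewrite F0T mrk0.
by rewrite F0T -/(mrank M) rkM => -[] d1; move: d_ge2; rewrite d1.
Qed.

Lemma deg_chern_combination :
  D ((((d + 2)%:R : int) *: ck M d i 2 - ((2 * d)%:R : int) *: (ck M d i 1 ^+ 2))
       * al ^+ (d - 2))
  = ((3 * d + 2)%:R : int) * ((N2 M)%:R - ('C(d.+1, 2))%:R).
Proof.
have [q [r [cM_expansion q_homog q2 ord_r]]] := prod_1D_expansion chern_factors_homog.
set L := \sum_(l <- chern_factors) l in cM_expansion q2.
have L_homog : L \is 1.-homog.
  by rewrite /L big_seq; apply: rpred_sum => l /(allP chern_factors_homog).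
have [c1E c2E] := pihomog_1D_expansion L_homog q_homog ord_r.
rewrite /ck !hpartE cM_chern_factors cM_expansion c1E c2E.
rewrite mulrBl -!scalerAl (deg_mapB degD) !(deg_mapZ degD).
have degL2 : D (L ^+ 2 * al ^+ (d - 2)) = bform L L by rewrite expr2.
have deg2q : D (q * al ^+ (d - 2)) *+ 2 = bform L L - \sum_(l <- chern_factors) bform l l.
  rewrite -(deg_mapMn degD) -mulrnAl q2 mulrBl (deg_mapB degD) degL2.
  by rewrite mulr_suml (deg_map_sum degD); congr (_ - _); apply: eq_bigr => l _; rewrite expr2.
have bin2E : ('C(d.+1, 2))%:R *+ 2 = (d.+1 * d)%:R :> int.
  by rewrite -mulr_natr -natrM bin2_double.
rewrite degL2 /L bform_sum_chern_factors -/L nflats2E.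
rewrite /L bform_sum_chern_factors sum_bform_chern_factors -/L nflats2E in deg2q.
apply: (pmulrnI (n := 2)) => //=.
rewrite !mulrnBl -!mulrnAr deg2q [X in _ = _ * X]mulrnBl bin2E; ring.
Qed.

End ChowDegree.

Unset Implicit Arguments.

Theorem corollary4p15 (E : finType) (M : matroid E) (d : nat) (i : E)
    (D : Pol E -> int) :
  loopless M -> mrank M = d.+1 -> (2 <= d)%N -> is_deg_map M d D ->
  D ((((d + 2)%:R : int) *: ck M d i 2 - ((2 * d)%:R : int) *: (ck M d i 1 ^+ 2))
       * alpha M i ^+ (d - 2))
  = ((3 * d + 2)%:R : int) * ((N2 M)%:R - ('C(d.+1, 2))%:R)
  /\ 0 <= ((3 * d + 2)%:R : int) * ((N2 M)%:R - ('C(d.+1, 2))%:R).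
Proof.
move=> loopM rkM d_ge2 degD; split; first exact: deg_chern_combination.
by rewrite mulr_ge0 // subr_ge0 ler_nat -rkM binomial_le_N2.
Qed.
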